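(* Let $X$ be locally connected. If $(X,\mathbb{F})$ is sensitive, then $(\mathcal{F}(X),\overline{\mathbb{F}})$ is pointwise sensitive.
   Context: $(X,d)$ compact metric, $\mathbb{F}=(f_n)$ continuous self-maps, $\omega_n=f_n\circ\cdots\circ f_1$. Sensitive: there is $\delta>0$ such that for every $x$ and every neighborhood $U$ of $x$ there is $n$ with $\mathrm{diam}(\omega_n(U))>\delta$. Pointwise sensitive: for every point $x$ there is $\delta_x>0$ such that every neighborhood $U$ of $x$ admits $n$ with $\mathrm{diam}(\omega_n(U))>\delta_x$. $\mathcal{F}(X)$: non-empty finite subsets with the Hausdorff metric $d_H$; induced system $\overline{\omega}_n(A)=\omega_n(A)$, notions defined using $d_H$. *)

From Stdlib Require Import Reals List.
Import ListNotations.
Open Scope R_scope.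

Record Metric (X : Type) := {
  d : X -> X -> R;
  d_nonneg : forall x y, 0 <= d x y;
  d_eq0 : forall x y, d x y = 0 <-> x = y;
  d_sym : forall x y, d x y = d y x;
  d_tri : forall x y z, d x z <= d x y + d y z
}.
Arguments d {X} _ _ _.

Section MetricNotions.
Context {X : Type} (M : Metric X).

Definition mopen (U : X -> Prop) : Prop :=
  forall x, U x -> exists r, 0 < r /\ forall y, d M x y < r -> U y.

Definition mcompact : Prop :=
  forall (I : Type) (U : I -> X -> Prop),
    (forall i, mopen (U i)) -> (forall x, exists i, U i x) ->
    exists l : list I, forall x, exists i, In i l /\ U i x.

Definition mconnected (A : X -> Prop) : Prop :=
  forall U V, mopen U -> mopen V ->
    (forall x, A x -> U x \/ V x) ->
    (exists x, A x /\ U x) -> (exists x, A x /\ V x) ->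
    exists x, A x /\ U x /\ V x.

Definition mlocally_connected : Prop :=
  forall x U, mopen U -> U x ->
    exists V, mopen V /\ mconnected V /\ V x /\ forall y, V y -> U y.

Definition mcontinuous (f : X -> X) : Prop :=
  forall x eps, 0 < eps -> exists del, 0 < del /\
    forall y, d M x y < del -> d M (f x) (f y) < eps.
End MetricNotions.

(* Non-autonomous system: f k is the map f_(k+1); omega f n = f_n o ... o f_1. *)
Fixpoint omega {T : Type} (f : nat -> T -> T) (n : nat) : T -> T :=
  match n with
  | O => fun x => x
  | S k => fun x => f k (omega f k x)
  end.

Definition nbhd {T : Type} (dist : T -> T -> R) (x : T) (U : T -> Prop) : Prop :=
  exists r, 0 < r /\ forall y, dist x y < r -> U y.

(* diam(w n (U)) > del, unfolded as existence of two points *)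
Definition diam_image_gt {T : Type} (dist : T -> T -> R) (g : T -> T)
  (U : T -> Prop) (del : R) : Prop :=
  exists y z, U y /\ U z /\ dist (g y) (g z) > del.

Definition sensitive {T : Type} (dist : T -> T -> R) (w : nat -> T -> T) : Prop :=
  exists del, 0 < del /\ forall x U, nbhd dist x U ->
    exists n, (1 <= n)%nat /\ diam_image_gt dist (w n) U del.

Definition pointwise_sensitive {T : Type} (dist : T -> T -> R) (w : nat -> T -> T) : Prop :=
  forall x, exists del, 0 < del /\ forall U, nbhd dist x U ->
    exists n, (1 <= n)%nat /\ diam_image_gt dist (w n) U del.

(* F(X): non-empty finite subsets, represented by non-empty lists x0 :: l. *)
Definition FX (X : Type) : Type := (X * list X)%type.
Definition elems {X : Type} (A : FX X) : list X := fst A :: snd A.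

Definition Fmap {X : Type} (g : X -> X) (A : FX X) : FX X :=
  (g (fst A), map g (snd A)).

Definition pt_set_dist {X : Type} (M : Metric X) (x : X) (B : FX X) : R :=
  fold_right (fun z acc => Rmin (d M x z) acc) (d M x (fst B)) (snd B).

Definition maxl (x0 : R) (l : list R) : R := fold_right Rmax x0 l.

Definition dH {X : Type} (M : Metric X) (A B : FX X) : R :=
  Rmax (maxl (pt_set_dist M (fst A) B) (map (fun a => pt_set_dist M a B) (snd A)))
       (maxl (pt_set_dist M (fst B) A) (map (fun b => pt_set_dist M b A) (snd B))).

Definition Fsys {X : Type} (f : nat -> X -> X) : nat -> FX X -> FX X :=
  fun k => Fmap (f k).

(** Fix A in F(X) with k points and a0 in A, and let del be a sensitivity
    constant of (X, F); we show that eps = del / (2 (k + 2)) works at A, up to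
    a factor 1/2.  Given a neighbourhood U of A, pick a connected open V around
    a0 so small that adding any point of V to A stays in U.  Sensitivity gives
    n and y, z in V with d(w_n y, w_n z) > del.  Of the k + 1 radii
    2 eps j (1 <= j <= k + 1), all below del, one is eps-far from each
    d(w_n y, w_n a) with a in A; by connectedness some x in V realises it as
    d(w_n y, w_n x), so w_n x is eps-far from w_n(A), and A and A ∪ {x} are
    two points of U whose images are at Hausdorff distance at least eps. *)
From Stdlib Require Import Reals List Lra Lia Classical.
Import ListNotations.
Open Scope R_scope.

Section MetricFacts.
Context {X : Type} (M : Metric X).

Lemma d_refl x : d M x x = 0.
Proof. exact (proj2 (d_eq0 X M x x) eq_refl). Qed.

Lemma d_abs_diff_le p x y : Rabs (d M p x - d M p y) <= d M x y.
Proof.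
  pose proof (d_tri X M p x y); pose proof (d_tri X M p y x).
  rewrite (d_sym X M y x) in *. apply Rabs_le; lra.
Qed.

Lemma mopen_ball p r : mopen M (fun x => d M p x < r).
Proof.
  intros x Hx; exists (r - d M p x); split; [lra|].
  intros y Hy; pose proof (d_tri X M p x y); lra.
Qed.

Lemma mcontinuous_comp g h :
  mcontinuous M g -> mcontinuous M h -> mcontinuous M (fun x => g (h x)).
Proof.
  intros Hg Hh x eps Heps.
  destruct (Hg (h x) eps Heps) as [e1 [He1 H1]].
  destruct (Hh x e1 He1) as [e2 [He2 H2]].
  exists e2; split; auto.
Qed.

Lemma mopen_dist_lt g p t : mcontinuous M g -> mopen M (fun x => d M p (g x) < t).
Proof.
  intros Hg x Hx.
  destruct (Hg x (t - d M p (g x))) as [e [He H]]; [lra|].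
  exists e; split; auto; intros y Hy.
  specialize (H y Hy); pose proof (d_tri X M p (g x) (g y)); lra.
Qed.

Lemma mopen_dist_gt g p t : mcontinuous M g -> mopen M (fun x => t < d M p (g x)).
Proof.
  intros Hg x Hx.
  destruct (Hg x (d M p (g x) - t)) as [e [He H]]; [lra|].
  exists e; split; auto; intros y Hy.
  specialize (H y Hy); pose proof (d_tri X M p (g y) (g x)).
  rewrite (d_sym X M (g y)) in *; lra.
Qed.

Lemma mconnected_dist_ivt (V : X -> Prop) g p y z t :
  mconnected M V -> mcontinuous M g -> V y -> V z ->
  d M p (g y) < t < d M p (g z) -> exists x, V x /\ d M p (g x) = t.
Proof.
  intros HV Hg Vy Vz Ht; apply NNPP; intro Hno.
  destruct (HV (fun x => d M p (g x) < t) (fun x => t < d M p (g x)))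
    as [x [_ [H1 H2]]].
  - exact (mopen_dist_lt g p t Hg).
  - exact (mopen_dist_gt g p t Hg).
  - intros x Vx; destruct (Rtotal_order (d M p (g x)) t) as [H|[H|H]]; auto.
    exfalso; eauto.
  - exists y; split; [exact Vy | lra].
  - exists z; split; [exact Vz | lra].
  - lra.
Qed.

End MetricFacts.

Lemma mcontinuous_omega {X : Type} (M : Metric X) (f : nat -> X -> X) :
  (forall k, mcontinuous M (f k)) -> forall n, mcontinuous M (omega f n).
Proof.
  intros Hf; induction n as [|n IH]; simpl.
  - intros x e He; exists e; split; auto.
  - exact (mcontinuous_comp M (f n) (omega f n) (Hf n) IH).
Qed.

Section Hausdorff.
Context {X : Type} (M : Metric X).

Lemma fold_Rmin_le_init (g : X -> R) l v :
  fold_right (fun z acc => Rmin (g z) acc) v l <= v.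
Proof.
  induction l as [|a l IH]; simpl; [lra|].
  eapply Rle_trans; [apply Rmin_r | exact IH].
Qed.

Lemma fold_Rmin_le_mem (g : X -> R) l v z :
  In z l -> fold_right (fun z acc => Rmin (g z) acc) v l <= g z.
Proof.
  induction l as [|a l IH]; simpl; [tauto|].
  intros [<-|Hz]; [apply Rmin_l|].
  eapply Rle_trans; [apply Rmin_r | exact (IH Hz)].
Qed.

Lemma fold_Rmin_ge (g : X -> R) e l v :
  e <= v -> (forall z, In z l -> e <= g z) ->
  e <= fold_right (fun z acc => Rmin (g z) acc) v l.
Proof.
  induction l as [|a l IH]; simpl; intros Hv Hl; [exact Hv|].
  apply Rmin_glb; auto.
Qed.

Lemma pt_set_dist_le p B b : In b (elems B) -> pt_set_dist M p B <= d M p b.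
Proof.
  intros [<-|Hb]; [apply fold_Rmin_le_init | exact (fold_Rmin_le_mem _ _ _ _ Hb)].
Qed.

Lemma pt_set_dist_ge p B e :
  (forall b, In b (elems B) -> e <= d M p b) -> e <= pt_set_dist M p B.
Proof. intros H; apply fold_Rmin_ge; [apply H; left | intros; apply H; right]; auto. Qed.

Lemma maxl_ge_mem v l w : In w (v :: l) -> w <= maxl v l.
Proof.
  unfold maxl; induction l as [|a l IH]; simpl; intros Hw.
  - destruct Hw as [<-|[]]; lra.
  - destruct Hw as [<-|[<-|Hw]]; [|apply Rmax_l|];
      (eapply Rle_trans; [apply IH; simpl; auto | apply Rmax_r]).
Qed.

Lemma maxl_lt v l r : (forall w, In w (v :: l) -> w < r) -> maxl v l < r.
Proof.
  unfold maxl; induction l as [|a l IH]; simpl; intros H; [auto|].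
  apply Rmax_lub_lt; [auto|]. apply IH; intros w [<-|Hw]; auto.
Qed.

Lemma dH_lt A B r :
  (forall a, In a (elems A) -> exists b, In b (elems B) /\ d M a b < r) ->
  (forall b, In b (elems B) -> exists a, In a (elems A) /\ d M b a < r) ->
  dH M A B < r.
Proof.
  assert (Hside : forall A B, (forall a, In a (elems A) ->
            exists b, In b (elems B) /\ d M a b < r) ->
          maxl (pt_set_dist M (fst A) B) (map (fun a => pt_set_dist M a B) (snd A)) < r).
  { intros A' B' H; apply maxl_lt; intros w Hw.
    assert (Hw' : exists a, In a (elems A') /\ w = pt_set_dist M a B').
    { destruct Hw as [<-|Hw]; [exists (fst A'); split; [left|]; auto|].
      apply in_map_iff in Hw; destruct Hw as [a [<- Ha]].
      exists a; split; [right|]; auto. }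
    destruct Hw' as [a [Ha ->]]; destruct (H a Ha) as [b [Hb Hab]].
    pose proof (pt_set_dist_le a B' b Hb); lra. }
  intros HAB HBA; apply Rmax_lub_lt; auto.
Qed.

Lemma dH_ge A B b e :
  In b (elems B) -> (forall a, In a (elems A) -> e <= d M b a) -> e <= dH M A B.
Proof.
  intros Hb H; eapply Rle_trans; [|apply Rmax_r].
  eapply Rle_trans; [apply (pt_set_dist_ge b A e H)|].
  apply maxl_ge_mem; destruct Hb as [<-|Hb]; [left; auto|].
  right; apply in_map_iff; eauto.
Qed.

Lemma dH_add_point_lt A x r :
  0 < r -> d M (fst A) x < r -> dH M A (fst A, x :: snd A) < r.
Proof.
  intros Hr Hx; rewrite (d_sym X M) in Hx.
  apply dH_lt.
  - intros a Ha; exists a; rewrite d_refl; split; auto.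
    destruct Ha as [<-|Ha]; [left | right; right]; auto.
  - intros b [<-|[<-|Hb]].
    + exists (fst A); rewrite d_refl; split; [left|]; auto.
    + exists (fst A); split; [left|]; auto.
    + exists b; rewrite d_refl; split; [right|]; auto.
Qed.

Lemma dH_self_lt A r : 0 < r -> dH M A A < r.
Proof. intros Hr; apply dH_lt; intros a Ha; exists a; rewrite d_refl; auto. Qed.

End Hausdorff.

Lemma elems_Fmap {X : Type} (g : X -> X) A : elems (Fmap g A) = map g (elems A).
Proof. reflexivity. Qed.

Lemma omega_Fsys {X : Type} (f : nat -> X -> X) n B :
  omega (Fsys f) n B = Fmap (omega f n) B.
Proof.
  revert B; induction n as [|n IH]; intros [b l]; simpl.
  - unfold Fmap; simpl; rewrite map_id; reflexivity.
  - rewrite IH; unfold Fsys, Fmap; simpl; rewrite map_map; reflexivity.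
Qed.

Lemma grid_close_unique eps c j j' :
  Rabs (2 * eps * INR j - c) < eps -> Rabs (2 * eps * INR j' - c) < eps -> j = j'.
Proof.
  intros Hj Hj'; destruct (Nat.eq_dec j j') as [|Hne]; [auto|exfalso].
  assert (Hgap : 1 <= Rabs (INR j - INR j')).
  { destruct (proj1 (Nat.lt_gt_cases j j') Hne) as [Hlt|Hlt];
      apply le_INR in Hlt; rewrite S_INR in Hlt;
      [rewrite Rabs_left1 | rewrite Rabs_right]; lra. }
  revert Hj Hj' Hgap; unfold Rabs; repeat destruct Rcase_abs; intros; nra.
Qed.

Lemma grid_point_far eps (cs : list R) (js : list nat) :
  NoDup js -> (length cs < length js)%nat ->
  exists j, In j js /\ forall c, In c cs -> eps <= Rabs (2 * eps * INR j - c).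
Proof.
  revert js; induction cs as [|c cs IH]; intros js Hnd Hlen.
  - destruct js as [|j js]; simpl in Hlen; [lia|].
    exists j; split; [left|intros ? []]; auto.
  - destruct (classic (exists j0, In j0 js /\ Rabs (2 * eps * INR j0 - c) < eps))
      as [[j0 [Hj0 Hclose]]|Hfar].
    + destruct (in_split _ _ Hj0) as [l1 [l2 ->]].
      destruct (IH (l1 ++ l2)) as [j [Hj Hcs]].
      * exact (NoDup_remove_1 _ _ _ Hnd).
      * rewrite length_app in *; simpl in *; lia.
      * exists j; split; [apply in_or_app; apply in_app_or in Hj; simpl; tauto|].
        intros c' [<-|Hc']; auto.
        apply Rnot_lt_le; intros Hjc.
        rewrite (grid_close_unique eps c j j0 Hjc Hclose) in Hj.
        exact (NoDup_remove_2 _ _ _ Hnd Hj).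
    + destruct (IH js Hnd) as [j [Hj Hcs]]; [simpl in Hlen; lia|].
      exists j; split; auto; intros c' [<-|Hc']; auto.
      apply Rnot_lt_le; intros Hjc; eauto.
Qed.

Lemma mconnected_escapes_finite_set {X : Type} (M : Metric X) (V : X -> Prop)
    g y z del (cs : list X) :
  mconnected M V -> mcontinuous M g -> V y -> V z -> 0 < del ->
  del < d M (g y) (g z) ->
  exists x, V x /\
    forall c, In c cs -> del / (2 * (INR (length cs) + 2)) <= d M (g x) c.
Proof.
  intros HV Hg Vy Vz Hdel Hyz.
  set (k := length cs); set (eps := del / (2 * (INR k + 2))).
  assert (Hk : 0 <= INR k) by apply pos_INR.
  assert (Heps : eps * (2 * (INR k + 2)) = del) by (unfold eps; field; lra).
  destruct (grid_point_far eps (map (d M (g y)) cs) (seq 1 (S k)))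
    as [j [Hj Hfar]]; [apply seq_NoDup | rewrite length_map, length_seq; lia |].
  apply in_seq in Hj.
  assert (Hj1 : 1 <= INR j) by (apply (le_INR 1); lia).
  assert (Hjk : INR j <= INR k + 1) by (rewrite <- S_INR; apply le_INR; lia).
  destruct (mconnected_dist_ivt M V g (g y) y z (2 * eps * INR j) HV Hg Vy Vz)
    as [x [Vx Hx]]; [rewrite d_refl; split; nra|].
  exists x; split; auto; intros c Hc.
  eapply Rle_trans; [apply (Hfar (d M (g y) c)), in_map; exact Hc|].
  rewrite <- Hx; apply d_abs_diff_le.
Qed.

Theorem mainTheorem11 (X : Type) (M : Metric X) (f : nat -> X -> X) :
  mcompact M ->
  (forall k, mcontinuous M (f k)) ->
  mlocally_connected M ->
  sensitive (d M) (omega f) ->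
  pointwise_sensitive (dH M) (omega (Fsys f)).
Proof.
  intros _ Hf Hlc [del [Hdel Hsens]] A.
  set (eps := del / (2 * (INR (length (elems A)) + 2))).
  assert (Heps : 0 < eps).
  { pose proof (pos_INR (length (elems A))); unfold eps; apply Rdiv_lt_0_compat; lra. }
  exists (eps / 2); split; [lra|]; intros U [r [Hr HU]].
  destruct (Hlc (fst A) _ (mopen_ball M (fst A) r)) as [V [HVo [HVc [HVa HVr]]]];
    [rewrite d_refl; exact Hr|].
  destruct (Hsens (fst A) V (HVo _ HVa)) as [n [Hn [y [z [Vy [Vz Hyz]]]]]].
  destruct (mconnected_escapes_finite_set M V (omega f n) y z del
              (map (omega f n) (elems A)) HVc (mcontinuous_omega M f Hf n) Vy Vz Hdel Hyz)
    as [x [Vx Hfar]].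
  rewrite length_map in Hfar.
  exists n; split; [exact Hn|]; exists A, (fst A, x :: snd A).
  split; [apply HU, dH_self_lt; exact Hr|].
  split; [apply HU, dH_add_point_lt; auto|].
  rewrite !omega_Fsys; apply Rlt_le_trans with eps; [lra|].
  apply (dH_ge M _ _ (omega f n x)); [simpl; auto|].
  rewrite elems_Fmap; exact Hfar.
Qed.
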